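(* Let $\mathcal X=\mathbb Z^3$ with coordinates $x=(x_{22},x_{11},x_{21})$, equipped with the crystal structure (for $i=0,1,2$): $\mathrm{wt}_0(x)=-2x_{11}$, $\mathrm{wt}_1(x)=2x_{11}-x_{21}-x_{22}$, $\mathrm{wt}_2(x)=2x_{21}+2x_{22}-2x_{11}$; $\varepsilon_0(x)=\max\{x_{21},2x_{11}-x_{22}\}$, $\varepsilon_1(x)=x_{22}-x_{11}$, $\varepsilon_2(x)=\max\{-x_{22},2x_{11}-2x_{22}-x_{21}\}$; $\varphi_i=\varepsilon_i+\mathrm{wt}_i$; for $c\in\mathbb Z$, with $C_2=\max\{c+x_{21}+x_{22},2x_{11}\}-\max\{x_{21}+x_{22},2x_{11}\}$: $e_0^c(x)=(C_2+x_{22}-c,\,x_{11}-c,\,x_{21}-C_2)$, $e_1^c(x)=(x_{22},\,x_{11}+c,\,x_{21})$, $e_2^c(x)=(C_2+x_{22},\,x_{11},\,c+x_{21}-C_2)$; and $\tilde e_i=e_i^{1}$, $\tilde f_i=e_i^{-1}$. Let $B^{2,\infty}$ be the set of $b=(b_{11},b_{12},b_{13},b_{22},b_{23},b_{24})\in\mathbb Z^6$ with $b_{11}+b_{12}+b_{13}=0$, $b_{22}+b_{23}+b_{24}=0$, $b_{11}=b_{22}+b_{23}$, $b_{24}=b_{12}+b_{13}$, with crystal structure (all unlisted entries unchanged): $\tilde e_0$: $b_{11}\mapsto b_{11}-1$, $b_{24}\mapsto b_{24}+1$, and if $b_{23}>b_{12}$ then $b_{23}\mapsto b_{23}-1$,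 $b_{13}\mapsto b_{13}+1$, while if $b_{23}\le b_{12}$ then $b_{22}\mapsto b_{22}-1$, $b_{12}\mapsto b_{12}+1$; $\tilde f_0$: $b_{11}\mapsto b_{11}+1$, $b_{24}\mapsto b_{24}-1$, and if $b_{23}\ge b_{12}$ then $b_{23}\mapsto b_{23}+1$, $b_{13}\mapsto b_{13}-1$, while if $b_{23}<b_{12}$ then $b_{22}\mapsto b_{22}+1$, $b_{12}\mapsto b_{12}-1$; $\tilde e_1$: $b_{11}\mapsto b_{11}+1$, $b_{12}\mapsto b_{12}-1$, $b_{23}\mapsto b_{23}+1$, $b_{24}\mapsto b_{24}-1$; $\tilde f_1$: the inverse changes; $\tilde e_2$: if $b_{12}\ge b_{23}$ then $b_{13}\mapsto b_{13}-1$, $b_{12}\mapsto b_{12}+1$; if $b_{12}<b_{23}$ then $b_{23}\mapsto b_{23}-1$, $b_{22}\mapsto b_{22}+1$; $\tilde f_2$: if $b_{12}>b_{23}$ then $b_{13}\mapsto b_{13}+1$, $b_{12}\mapsto b_{12}-1$; if $b_{12}\le b_{23}$ then $b_{23}\mapsto b_{23}+1$, $b_{22}\mapsto b_{22}-1$; $\varepsilon_0(b)=-b_{24}-\min(b_{12},b_{23})$, $\varphi_0(b)=-b_{11}-\min(b_{12},b_{23})$, $\varepsilon_1(b)=b_{12}$, $\varphi_1(b)=b_{23}$, $\varepsilon_2(b)=b_{13}+\max(b_{23}-b_{12},0)$, $\varphi_2(b)=b_{22}+\max(b_{12}-b_{23},0)$, $\mathrm{wt}_i=\varphi_i-\varepsilon_i$.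 Then the map $\Omega:\mathcal X\to B^{2,\infty}$ given by $b_{11}=x_{11}$, $b_{12}=x_{22}-x_{11}$, $b_{13}=-x_{22}$, $b_{22}=x_{21}$, $b_{23}=x_{11}-x_{21}$, $b_{24}=-x_{11}$ (with inverse $x_{11}=b_{11}$, $x_{21}=b_{22}$, $x_{22}=b_{11}+b_{12}$) is an isomorphism of crystals.
   Context: $\mathcal X$ is the ultra-discretization (tropicalization via $\times\mapsto+$, $/\mapsto-$, $+\mapsto\max$) of the positive geometric crystal for $C_2^{(1)}$ on $(\mathbb C^\times)^3$, and $B^{2,\infty}$ is the limit of a coherent family of perfect crystals for the Langlands dual algebra $D_3^{(2)}$; both are regarded as crystals with index set $\{0,1,2\}$ via the explicit data above. An isomorphism of crystals is a bijection $\Omega$ with $\Omega\circ\tilde e_i=\tilde e_i\circ\Omega$, $\Omega\circ\tilde f_i=\tilde f_i\circ\Omega$, $\varepsilon_i\circ\Omega=\varepsilon_i$, $\varphi_i\circ\Omega=\varphi_i$ and $\mathrm{wt}_i\circ\Omega=\mathrm{wt}_i$ for all $i$. *)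

From Stdlib Require Export ZArith.
Open Scope Z_scope.

Inductive idx := I0 | I1 | I2.

Record X := mkX { x22 : Z; x11 : Z; x21 : Z }.

Definition wtX (i : idx) (x : X) : Z :=
  match i with
  | I0 => -2 * x11 x
  | I1 => 2 * x11 x - x21 x - x22 x
  | I2 => 2 * x21 x + 2 * x22 x - 2 * x11 x
  end.

Definition epsX (i : idx) (x : X) : Z :=
  match i with
  | I0 => Z.max (x21 x) (2 * x11 x - x22 x)
  | I1 => x22 x - x11 x
  | I2 => Z.max (- x22 x) (2 * x11 x - 2 * x22 x - x21 x)
  end.

Definition phiX (i : idx) (x : X) : Z := epsX i x + wtX i x.

Definition C2 (c : Z) (x : X) : Z :=
  Z.max (c + x21 x + x22 x) (2 * x11 x) - Z.max (x21 x + x22 x) (2 * x11 x).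

Definition eXc (i : idx) (c : Z) (x : X) : X :=
  match i with
  | I0 => mkX (C2 c x + x22 x - c) (x11 x - c) (x21 x - C2 c x)
  | I1 => mkX (x22 x) (x11 x + c) (x21 x)
  | I2 => mkX (C2 c x + x22 x) (x11 x) (c + x21 x - C2 c x)
  end.

Definition eX (i : idx) (x : X) : X := eXc i 1 x.
Definition fX (i : idx) (x : X) : X := eXc i (-1) x.

(* The perfect crystal limit B^{2,oo}: elements of Z^6 satisfying inB. *)
Record B := mkB { b11 : Z; b12 : Z; b13 : Z; b22 : Z; b23 : Z; b24 : Z }.

Definition inB (b : B) : Prop :=
  b11 b + b12 b + b13 b = 0 /\ b22 b + b23 b + b24 b = 0 /\
  b11 b = b22 b + b23 b /\ b24 b = b12 b + b13 b.

Definition eB (i : idx) (b : B) : B :=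
  match i with
  | I0 =>
      if Z.ltb (b12 b) (b23 b)
      then mkB (b11 b - 1) (b12 b) (b13 b + 1) (b22 b) (b23 b - 1) (b24 b + 1)
      else mkB (b11 b - 1) (b12 b + 1) (b13 b) (b22 b - 1) (b23 b) (b24 b + 1)
  | I1 => mkB (b11 b + 1) (b12 b - 1) (b13 b) (b22 b) (b23 b + 1) (b24 b - 1)
  | I2 =>
      if Z.leb (b23 b) (b12 b)
      then mkB (b11 b) (b12 b + 1) (b13 b - 1) (b22 b) (b23 b) (b24 b)
      else mkB (b11 b) (b12 b) (b13 b) (b22 b + 1) (b23 b - 1) (b24 b)
  end.

Definition fB (i : idx) (b : B) : B :=
  match i with
  | I0 =>
      if Z.leb (b12 b) (b23 b)
      then mkB (b11 b + 1) (b12 b) (b13 b - 1) (b22 b) (b23 b + 1) (b24 b - 1)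
      else mkB (b11 b + 1) (b12 b - 1) (b13 b) (b22 b + 1) (b23 b) (b24 b - 1)
  | I1 => mkB (b11 b - 1) (b12 b + 1) (b13 b) (b22 b) (b23 b - 1) (b24 b + 1)
  | I2 =>
      if Z.ltb (b23 b) (b12 b)
      then mkB (b11 b) (b12 b - 1) (b13 b + 1) (b22 b) (b23 b) (b24 b)
      else mkB (b11 b) (b12 b) (b13 b) (b22 b - 1) (b23 b + 1) (b24 b)
  end.

Definition epsB (i : idx) (b : B) : Z :=
  match i with
  | I0 => - b24 b - Z.min (b12 b) (b23 b)
  | I1 => b12 b
  | I2 => b13 b + Z.max (b23 b - b12 b) 0
  end.

Definition phiB (i : idx) (b : B) : Z :=
  match i with
  | I0 => - b11 b - Z.min (b12 b) (b23 b)
  | I1 => b23 b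
  | I2 => b22 b + Z.max (b12 b - b23 b) 0
  end.

Definition wtB (i : idx) (b : B) : Z := phiB i b - epsB i b.

Definition Omega (x : X) : B :=
  mkB (x11 x) (x22 x - x11 x) (- x22 x) (x21 x) (x11 x - x21 x) (- x11 x).

From Stdlib Require Import Lia.

(* Omega is linear, and the four linear relations cut B^{2,oo} down to a rank-3
   lattice on which (b11, b12, b22) are free coordinates, so Omega is a bijection.
   Since b12 - b23 = x21 + x22 - 2 x11 on the image of Omega, the tropical
   correction C2 1 (resp. -C2 (-1)) in e_0, e_2 (resp. f_0, f_2) is the 0/1
   indicator of the branch b23 <= b12 (resp. b23 < b12) taken by the piecewise
   operators of B^{2,oo}; after that everything is linear arithmetic. *)

Definition OmegaInv (b : B) : X := mkX (b11 b + b12 b) (b11 b) (b22 b).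

Lemma Omega_inB (x : X) : inB (Omega x).
Proof. unfold inB, Omega; simpl; lia. Qed.

Lemma OmegaK (x : X) : OmegaInv (Omega x) = x.
Proof. destruct x as [a b c]; unfold OmegaInv, Omega; simpl; f_equal; ring. Qed.

Lemma OmegaInvK (b : B) : inB b -> Omega (OmegaInv b) = b.
Proof.
  destruct b as [b1 b2 b3 b4 b5 b6]; unfold inB, Omega, OmegaInv; simpl.
  intros H; f_equal; lia.
Qed.

Lemma Omega_inj (x y : X) : Omega x = Omega y -> x = y.
Proof. intros H; rewrite <- (OmegaK x), <- (OmegaK y), H; reflexivity. Qed.

Lemma Omega_onto (b : B) : inB b -> exists x : X, Omega x = b.
Proof. intros Hb; exists (OmegaInv b); apply OmegaInvK, Hb. Qed.

Lemma C2_raise (x : X) :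
  C2 1 x = if 2 * x11 x <=? x21 x + x22 x then 1 else 0.
Proof. unfold C2; destruct (Z.leb_spec (2 * x11 x) (x21 x + x22 x)); lia. Qed.

Lemma C2_lower (x : X) :
  C2 (-1) x = if 2 * x11 x <? x21 x + x22 x then -1 else 0.
Proof. unfold C2; destruct (Z.ltb_spec (2 * x11 x) (x21 x + x22 x)); lia. Qed.

Lemma Omega_branch_le (x : X) :
  (b23 (Omega x) <=? b12 (Omega x)) = (2 * x11 x <=? x21 x + x22 x).
Proof.
  cbn [Omega b12 b23].
  destruct (Z.leb_spec (x11 x - x21 x) (x22 x - x11 x));
    destruct (Z.leb_spec (2 * x11 x) (x21 x + x22 x)); lia.
Qed.

Lemma Omega_branch_lt (x : X) :
  (b23 (Omega x) <? b12 (Omega x)) = (2 * x11 x <? x21 x + x22 x).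
Proof.
  cbn [Omega b12 b23].
  destruct (Z.ltb_spec (x11 x - x21 x) (x22 x - x11 x));
    destruct (Z.ltb_spec (2 * x11 x) (x21 x + x22 x)); lia.
Qed.

Lemma Omega_eX (i : idx) (x : X) : Omega (eX i x) = eB i (Omega x).
Proof.
  unfold eX, eXc, eB; destruct i.
  - rewrite C2_raise, Z.ltb_antisym, Omega_branch_le.
    destruct (2 * x11 x <=? x21 x + x22 x); cbn [negb];
      unfold Omega; cbn [x11 x21 x22 b11 b12 b13 b22 b23 b24]; f_equal; ring.
  - unfold Omega; cbn [x11 x21 x22 b11 b12 b13 b22 b23 b24]; f_equal; ring.
  - rewrite C2_raise, Omega_branch_le.
    destruct (2 * x11 x <=? x21 x + x22 x);
      unfold Omega; cbn [x11 x21 x22 b11 b12 b13 b22 b23 b24]; f_equal; ring.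
Qed.

Lemma Omega_fX (i : idx) (x : X) : Omega (fX i x) = fB i (Omega x).
Proof.
  unfold fX, eXc, fB; destruct i.
  - rewrite C2_lower, Z.leb_antisym, Omega_branch_lt.
    destruct (2 * x11 x <? x21 x + x22 x); cbn [negb];
      unfold Omega; cbn [x11 x21 x22 b11 b12 b13 b22 b23 b24]; f_equal; ring.
  - unfold Omega; cbn [x11 x21 x22 b11 b12 b13 b22 b23 b24]; f_equal; ring.
  - rewrite C2_lower, Omega_branch_lt.
    destruct (2 * x11 x <? x21 x + x22 x);
      unfold Omega; cbn [x11 x21 x22 b11 b12 b13 b22 b23 b24]; f_equal; ring.
Qed.

Lemma epsB_Omega (i : idx) (x : X) : epsB i (Omega x) = epsX i x.
Proof. destruct i; unfold epsB, epsX, Omega; cbn [b12 b13 b22 b23 b24]; lia. Qed.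

Lemma phiB_Omega (i : idx) (x : X) : phiB i (Omega x) = phiX i x.
Proof. destruct i; unfold phiB, phiX, epsX, wtX, Omega; cbn [b11 b12 b22 b23]; lia. Qed.

Lemma wtB_Omega (i : idx) (x : X) : wtB i (Omega x) = wtX i x.
Proof. unfold wtB; rewrite phiB_Omega, epsB_Omega; unfold phiX; ring. Qed.

Theorem mainTheorem6 :
  (forall x : X, inB (Omega x)) /\
  (forall x y : X, Omega x = Omega y -> x = y) /\
  (forall b : B, inB b -> exists x : X, Omega x = b) /\
  (forall (i : idx) (x : X),
      Omega (eX i x) = eB i (Omega x) /\
      Omega (fX i x) = fB i (Omega x) /\
      epsB i (Omega x) = epsX i x /\
      phiB i (Omega x) = phiX i x /\
      wtB i (Omega x) = wtX i x).
Proof.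
  split; [exact Omega_inB |].
  split; [exact Omega_inj |].
  split; [exact Omega_onto |].
  intros i x.
  repeat split;
    auto using Omega_eX, Omega_fX, epsB_Omega, phiB_Omega, wtB_Omega.
Qed.
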